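(* Let $\beta\in\Phi_+$, $i\in I$ and $w\in W^v$ with $w^{-1}(\alpha_i)=\alpha_i$. If $\beta$, $r_i(\beta)$ and $w(\beta)$ are all quantum roots, then $r_iw(\beta)$ is a quantum root, and $r_iw(\beta^\vee)=w(\beta^\vee)+r_i(\beta^\vee)-\beta^\vee$.
   Context: Kac–Moody root datum $(A,X,Y,(\alpha_i)_{i\in I},(\alpha_i^\vee)_{i\in I})$, generalized Cartan matrix $A$ with $\langle\alpha_i^\vee,\alpha_j\rangle=a_{i,j}$, simple reflections $r_i(x)=x-\langle\alpha_i^\vee,x\rangle\alpha_i$, $r_i(y)=y-\langle y,\alpha_i\rangle\alpha_i^\vee$, $W^v=\langle r_i\rangle$, $\Phi=W^v\{\alpha_i\}$, $\Phi_+=\Phi\cap\bigoplus\mathbb Z_{\ge0}\alpha_i$; coroot $\beta^\vee=w(\alpha_i^\vee)$ and $s_\beta=wr_iw^{-1}$ for $\beta=w(\alpha_i)$. $\mathrm{Inv}(w)=\{\alpha\in\Phi_+\mid w\alpha\in\Phi_-\}$; $\beta\in\Phi_+$ is quantum if $\langle\beta^\vee,\gamma\rangle=1$ for all $\gamma\in\mathrm{Inv}(s_\beta)\setminus\{\beta\}$ (in particular quantum roots are positive). *)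

(* Kac-Moody root datum with X = Y = Z^n (dual free Z-modules
   of rank n, pairing = standard dot product). *)
From HB Require Import structures.
From mathcomp Require Import all_boot all_order all_algebra.
From Stdlib Require Import ClassicalEpsilon.
Set Implicit Arguments. Unset Strict Implicit. Unset Printing Implicit Defensive.
Import Order.TTheory GRing.Theory Num.Theory.
Local Open Scope ring_scope.

Section KM.
Variables (n : nat) (I : finType).
Variables (alpha alphav : I -> 'rV[int]_n).

Definition pairing (y x : 'rV[int]_n) : int := \sum_(k < n) y ord0 k * x ord0 k.

Definition rX (i : I) (x : 'rV[int]_n) : 'rV[int]_n :=
  x - pairing (alphav i) x *: alpha i.
Definition rY (i : I) (y : 'rV[int]_n) : 'rV[int]_n :=
  y - pairing y (alpha i) *: alphav i.

(* Elements of W^v are represented by words [:: i1; ...; ik] meaning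
   r_{i1} ... r_{ik}; the inverse is the reversed word. *)
Definition actX (w : seq I) (x : 'rV[int]_n) : 'rV[int]_n := foldr rX x w.
Definition actY (w : seq I) (y : 'rV[int]_n) : 'rV[int]_n := foldr rY y w.

Definition is_root (x : 'rV[int]_n) : Prop := exists (w : seq I) (i : I), actX w (alpha i) = x.
Definition in_pos_cone (x : 'rV[int]_n) : Prop :=
  exists c : I -> nat, x = \sum_(i : I) (c i)%:Z *: alpha i.
Definition pos_root (x : 'rV[int]_n) : Prop := is_root x /\ in_pos_cone x.
Definition neg_root (x : 'rV[int]_n) : Prop := is_root x /\ in_pos_cone (- x).

Definition Inv (w : seq I) (g : 'rV[int]_n) : Prop := pos_root g /\ neg_root (actX w g).

Definition presentation (beta : 'rV[int]_n) : option (seq I * I) :=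
  match excluded_middle_informative
          (exists p : seq I * I, actX p.1 (alpha p.2) = beta) with
  | left h => Some (proj1_sig (constructive_indefinite_description _ h))
  | right _ => None
  end.

Definition coroot (beta : 'rV[int]_n) : 'rV[int]_n :=
  match presentation beta with
  | Some p => actY p.1 (alphav p.2)
  | None => 0
  end.

Definition refl_word (beta : 'rV[int]_n) : seq I :=
  match presentation beta with
  | Some p => p.1 ++ p.2 :: rev p.1
  | None => [::]
  end.

Definition quantum (beta : 'rV[int]_n) : Prop :=
  pos_root beta /\
  forall g, Inv (refl_word beta) g -> g <> beta -> pairing (coroot beta) g = 1.

End KM.

Definition gen_cartan (I : finType) (A : I -> I -> int) : Prop :=
  [/\ forall i, A i i = 2,
      forall i j, i != j -> A i j <= 0
    & forall i j, A i j = 0 <-> A j i = 0].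

Definition free_family (n : nat) (I : finType) (v : I -> 'rV[int]_n) : Prop :=
  forall c : I -> int, \sum_(i : I) c i *: v i = 0 -> forall i, c i = 0.

Definition KM_root_datum (n : nat) (I : finType) (A : I -> I -> int)
    (alpha alphav : I -> 'rV[int]_n) : Prop :=
  [/\ gen_cartan A,
      forall i j, pairing (alphav i) (alpha j) = A i j,
      free_family alpha
    & free_family alphav].

From Pilot Require Import Defs.
From mathcomp Require Import all_boot all_order all_algebra.
From mathcomp Require Import zify ring.
From mathcomp Require Import boolp.
From Stdlib Require Import ClassicalEpsilon.
Set Implicit Arguments. Unset Strict Implicit. Unset Printing Implicit Defensive.
Import Order.TTheory GRing.Theory Num.Theory.
Local Open Scope ring_scope.

(* Let d = r_i(w beta) and c = <beta^v, alpha_i>, which is also <(w beta)^v, alpha_i>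
   because w fixes alpha_i.  As s_d = r_i s_(w beta) r_i and d^v = r_i((w beta)^v),
   r_i maps every g in Inv(s_d) other than alpha_i and s_d(-alpha_i) into
   Inv(s_(w beta)) \ {w beta}, with <d^v, g> = <(w beta)^v, r_i g> = 1.  The two
   exceptional roots lie in Inv(s_d) only when c < 0, and <d^v, .> equals -c on
   them; then alpha_i is in Inv(s_(r_i beta)) and <(r_i beta)^v, alpha_i> = -c, so
   quantumness of r_i beta forces c = -1.  The coroot identity only uses
   <w(beta^v), alpha_i> = <beta^v, alpha_i>.

   The facts about roots behind this (every root is positive or negative, and the
   coroot w(alpha_i^v) depends only on the root w(alpha_i)) are proved from scratch:
   by Humphreys' argument, w(alpha_s) is positive whenever l(w r_s) >= l(w), which
   reduces to rank two, where the alternating products r_s r_t r_s ... are computed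
   explicitly. *)

Section Pairing.
Variable n : nat.
Implicit Types x y : 'rV[int]_n.

Lemma pairingDl y1 y2 x : pairing (y1 + y2) x = pairing y1 x + pairing y2 x.
Proof. by rewrite /pairing -big_split; apply: eq_bigr => k _; rewrite mxE mulrDl. Qed.

Lemma pairingDr y x1 x2 : pairing y (x1 + x2) = pairing y x1 + pairing y x2.
Proof. by rewrite /pairing -big_split; apply: eq_bigr => k _; rewrite mxE mulrDr. Qed.

Lemma pairingZl a y x : pairing (a *: y) x = a * pairing y x.
Proof. by rewrite /pairing mulr_sumr; apply: eq_bigr => k _; rewrite mxE mulrA. Qed.

Lemma pairingZr a y x : pairing y (a *: x) = a * pairing y x.
Proof. by rewrite /pairing mulr_sumr; apply: eq_bigr => k _; rewrite mxE mulrCA. Qed.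

Lemma pairingNr y x : pairing y (- x) = - pairing y x.
Proof. by rewrite -scaleN1r pairingZr mulN1r. Qed.

Lemma pairingBl y1 y2 x : pairing (y1 - y2) x = pairing y1 x - pairing y2 x.
Proof. by rewrite pairingDl -scaleN1r pairingZl mulN1r. Qed.

Lemma pairingBr y x1 x2 : pairing y (x1 - x2) = pairing y x1 - pairing y x2.
Proof. by rewrite pairingDr pairingNr. Qed.

Lemma pairing0r y : pairing y 0 = 0.
Proof. by rewrite -(scale0r (0 : 'rV[int]_n)) pairingZr mul0r. Qed.

Lemma pairing_delta y k : pairing y (delta_mx 0 k) = y 0 k.
Proof.
rewrite /pairing (bigD1 k) //= mxE !eqxx mulr1 big1 ?addr0 // => l /negbTE kl.
by rewrite mxE kl andbF mulr0.
Qed.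

Lemma pairing_eq0 y : (forall x, pairing y x = 0) -> y = 0.
Proof. by move=> y0; apply/matrixP => a b; rewrite (ord1 a) mxE -pairing_delta. Qed.

End Pairing.

Section AlternatingWords.
Variable T : eqType.
Implicit Types (s t : T) (x : seq T).

(* [alt_word s t k] has length [k] and ends with [t]: [.. s t s t]. *)
Fixpoint alt_word s t k : seq T :=
  if k is k'.+1 then rcons (alt_word t s k') t else [::].

Definition st_word s t x := all (fun z => z \in [:: s; t]) x.

Lemma st_wordC s t x : st_word s t x = st_word t s x.
Proof. by apply: eq_all => z; rewrite !inE orbC. Qed.

Lemma st_word_rcons s t x z :
  st_word s t (rcons x z) = st_word s t x && (z \in [:: s; t]).
Proof. by rewrite /st_word all_rcons andbC. Qed.

Lemma size_alt_word s t k : size (alt_word s t k) = k.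
Proof. by elim: k s t => [//|k IH] s t; rewrite /= size_rcons IH. Qed.

Lemma st_word_alt_word s t k : st_word s t (alt_word s t k).
Proof.
elim: k s t => [//|k IH] s t.
by rewrite /= st_word_rcons !inE eqxx orbT andbT st_wordC.
Qed.

Lemma alt_word_add2 s t k : alt_word s t (k + 2) = alt_word s t k ++ [:: s; t].
Proof. by rewrite addn2 /= -!cats1 -catA. Qed.

Lemma alt_wordD_even s t k p :
  alt_word s t (k + 2 * p) = alt_word s t k ++ alt_word s t (2 * p).
Proof.
elim: p => [|p IH]; first by rewrite muln0 addn0 cats0.
by rewrite mulnS (addnC 2) addnA !alt_word_add2 IH catA.
Qed.

Lemma rev_alt_word_even s t p : rev (alt_word s t (2 * p)) = alt_word t s (2 * p).
Proof.
elim: p => [//|p IH]; rewrite mulnS addnC alt_word_add2 rev_cat IH.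
by rewrite addnC alt_wordD_even.
Qed.

End AlternatingWords.

(* The new coefficients of P alpha_s + Q alpha_t (plus any x) under [alt_word s t k],
   where [u], [v] are the pairings of the vector with alpha_s^v, alpha_t^v and
   [a] = <alpha_s^v, alpha_t>, [b] = <alpha_t^v, alpha_s>. *)
Fixpoint alt_coef (a b : int) (k : nat) (u v P Q : int) : int * int :=
  if k is k'.+1 then
    let r := alt_coef b a k' (- v) (u - a * v) (Q - v) P in (r.2, r.1)
  else (P, Q).

Lemma alt_coef_ge0 k a b u v P Q :
  a <= 0 -> b <= 0 -> 4 <= a * b -> u = 2 * P + a * Q -> v = b * P + 2 * Q ->
  0 <= P -> 0 <= Q -> v <= 0 ->
  0 <= (alt_coef a b k u v P Q).1 /\ 0 <= (alt_coef a b k u v P Q).2.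
Proof.
elim: k a b u v P Q => [//|k IH] a b u v P Q a_le0 b_le0 ab_ge4 u_eq v_eq P_ge0 Q_ge0.
move=> v_le0.
(* the two products from which lia sees that the new v stays nonpositive *)
have prod1_ge0 : 0 <= - a * (- b * P - 2 * Q) by apply: mulr_ge0; lia.
have prod2_ge0 : 0 <= (a * b - 4) * P by apply: mulr_ge0; lia.
have [] // := IH b a (- v) (u - a * v) (Q - v) P; rewrite ?(mulrC b) //; lia.
Qed.

(* [alt_coef a b k 2 b 1 0] are the coordinates of [alt_word s t k] applied to alpha_s. *)
Definition fin_dihedral (a b : int) (m : nat) :=
  [/\ (0 < m)%N, forall u v, alt_coef a b (2 * m) u v 0 0 = (0, 0)
    & forall k, (k < m)%N ->
        0 <= (alt_coef a b k 2 b 1 0).1 /\ 0 <= (alt_coef a b k 2 b 1 0).2].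

Lemma finite_dihedral a b : a <= 0 -> b <= 0 -> (a = 0 <-> b = 0) -> a * b < 4 ->
  exists m, fin_dihedral a b m.
Proof.
move=> a_le0 b_le0 ab0 ab_lt4.
(* up to order, (a, b) is (0, 0), (-1, -1), (-1, -2) or (-1, -3),
   where r_s r_t has order m = 2, 3, 4, 6 *)
have [ea|[ea|[ea|[ea|a_le4]]]] : a = 0 \/ a = -1 \/ a = -2 \/ a = -3 \/ a <= -4 by lia.
all: have [eb|[eb|[eb|[eb|b_le4]]]] : b = 0 \/ b = -1 \/ b = -2 \/ b = -3 \/ b <= -4 by lia.
all: subst; try by exfalso; nia.
all: [> exists 2%N | exists 3%N | exists 4%N | exists 6%N | exists 4%N | exists 6%N].
all: split=> //; last by case=> [|[|[|[|[|[|]]]]]].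
all: move=> u v; cbv [muln Nat.mul Nat.add]; cbn [alt_coef fst snd].
all: congr pair; ring.
Qed.

Section RootDatum.
Variables (n : nat) (I : finType) (alpha alphav : I -> 'rV[int]_n).
Implicit Types (x y : 'rV[int]_n).

Local Notation rX := (rX alpha alphav).
Local Notation rY := (rY alpha alphav).
Local Notation actX := (actX alpha alphav).
Local Notation actY := (actY alpha alphav).

Hypothesis pairing_simple : forall i, pairing (alphav i) (alpha i) = 2.

Lemma rXD i x y : rX i (x + y) = rX i x + rX i y.
Proof. by rewrite /Defs.rX pairingDr scalerDl opprD addrACA. Qed.

Lemma rXZ i a x : rX i (a *: x) = a *: rX i x.
Proof. by rewrite /Defs.rX pairingZr scalerBr scalerA. Qed.

Lemma rXN i x : rX i (- x) = - rX i x.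
Proof. by rewrite -scaleN1r rXZ scaleN1r. Qed.

Lemma rX0 i : rX i 0 = 0.
Proof. by rewrite /Defs.rX pairing0r scale0r subr0. Qed.

Lemma rX_alpha i : rX i (alpha i) = - alpha i.
Proof. by rewrite /Defs.rX pairing_simple scaler_nat mulr2n opprD addNKr. Qed.

Lemma rXK i : involutive (rX i).
Proof.
move=> x; rewrite /Defs.rX pairingBr pairingZr pairing_simple.
have -> : pairing (alphav i) x - pairing (alphav i) x * 2 = - pairing (alphav i) x by ring.
by rewrite scaleNr opprK subrK.
Qed.

Lemma rYK i : involutive (rY i).
Proof.
move=> y; rewrite /Defs.rY pairingBl pairingZl pairing_simple.
have -> : pairing y (alpha i) - pairing y (alpha i) * 2 = - pairing y (alpha i) by ring.
by rewrite scaleNr opprK subrK.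
Qed.

Lemma pairing_rY i y x : pairing (rY i y) x = pairing y (rX i x).
Proof. by rewrite /Defs.rY /Defs.rX pairingBl pairingBr pairingZl pairingZr mulrC. Qed.

Lemma actX_cat u1 u2 x : actX (u1 ++ u2) x = actX u1 (actX u2 x).
Proof. by rewrite /Defs.actX foldr_cat. Qed.

Lemma actX_rcons u i x : actX (rcons u i) x = actX u (rX i x).
Proof. by rewrite -cats1 actX_cat. Qed.

Lemma actY_cat u1 u2 y : actY (u1 ++ u2) y = actY u1 (actY u2 y).
Proof. by rewrite /Defs.actY foldr_cat. Qed.

Lemma actX_revK u : cancel (actX u) (actX (rev u)).
Proof.
by elim: u => [//|i u IH] x; rewrite rev_cons actX_rcons /= rXK IH.
Qed.

Lemma actX_Krev u : cancel (actX (rev u)) (actX u).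
Proof. by move=> x; rewrite -{1}(revK u) actX_revK. Qed.

Lemma actY_revK u : cancel (actY u) (actY (rev u)).
Proof.
by elim: u => [//|i u IH] y; rewrite rev_cons -cats1 actY_cat /= rYK IH.
Qed.

Lemma actY_Krev u : cancel (actY (rev u)) (actY u).
Proof. by move=> y; rewrite -{1}(revK u) actY_revK. Qed.

Lemma actXD u x y : actX u (x + y) = actX u x + actX u y.
Proof. by elim: u => [//|i u IH] /=; rewrite IH rXD. Qed.

Lemma actXZ u a x : actX u (a *: x) = a *: actX u x.
Proof. by elim: u => [//|i u IH] /=; rewrite IH rXZ. Qed.

Lemma actXN u x : actX u (- x) = - actX u x.
Proof. by rewrite -scaleN1r actXZ scaleN1r. Qed.

Lemma actXB u x y : actX u (x - y) = actX u x - actX u y.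
Proof. by rewrite actXD actXN. Qed.

Lemma actX0 u : actX u 0 = 0.
Proof. by elim: u => [//|i u IH] /=; rewrite IH rX0. Qed.

Lemma pairing_actY u y x : pairing (actY u y) x = pairing y (actX (rev u) x).
Proof.
by elim: u y x => [//|i u IH] y x; rewrite /= pairing_rY IH rev_cons actX_rcons.
Qed.

Lemma actY_cons_fixed w i y : actX (rev w) (alpha i) = alpha i ->
  actY (i :: w) y = actY w y + rY i y - y.
Proof.
by move=> w_fix; rewrite /= /Defs.rY pairing_actY w_fix addrCA addrAC subrr add0r.
Qed.

Hypothesis alpha_free : free_family alpha.

Definition comb (c : I -> int) : 'rV[int]_n := \sum_i c i *: alpha i.

Definition kdelta (k : I) : I -> int := fun i => (i == k)%:R.

Lemma combD c d : comb c + comb d = comb (fun i => c i + d i).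
Proof. by rewrite /comb -big_split; apply: eq_bigr => i _; rewrite scalerDl. Qed.

Lemma combN c : - comb c = comb (fun i => - c i).
Proof. by rewrite /comb -sumrN; apply: eq_bigr => i _; rewrite scaleNr. Qed.

Lemma combB c d : comb c - comb d = comb (fun i => c i - d i).
Proof. by rewrite combN combD. Qed.

Lemma combZ a c : a *: comb c = comb (fun i => a * c i).
Proof. by rewrite /comb scaler_sumr; apply: eq_bigr => i _; rewrite scalerA. Qed.

Lemma comb_inj c d : comb c = comb d -> c =1 d.
Proof.
move=> cd i; apply/eqP; rewrite -subr_eq0; apply/eqP.
apply: (alpha_free (c := fun j => c j - d j)).
by rewrite -/(comb _) -combB cd subrr.
Qed.

Lemma comb_kdelta k : comb (kdelta k) = alpha k.
Proof.
rewrite /comb (bigD1 k) //= /kdelta eqxx scale1r big1 ?addr0 // => j /negbTE ->.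
by rewrite scale0r.
Qed.

Lemma scale_alpha_comb a k : a *: alpha k = comb (fun i => a * kdelta k i).
Proof. by rewrite -combZ comb_kdelta. Qed.

Lemma comb0 : comb (fun _ => 0) = 0.
Proof. by rewrite /comb big1 // => i _; rewrite scale0r. Qed.

Lemma comb_supp1 c i : (forall j, j != i -> c j = 0) -> comb c = c i *: alpha i.
Proof.
by move=> c0; rewrite /comb (bigD1 i) //= big1 ?addr0 // => j /c0 ->; rewrite scale0r.
Qed.

Lemma alpha_neq0 k : alpha k != 0.
Proof.
apply/eqP => ak0; have := @comb_inj (kdelta k) (fun _ => 0).
by rewrite comb_kdelta comb0 ak0 => /(_ erefl k); rewrite /kdelta eqxx.
Qed.

Definition nonneg x := exists2 c, forall i, 0 <= c i & x = comb c.
Definition nonpos x := nonneg (- x).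

Lemma nonneg_cone x : in_pos_cone alpha x <-> nonneg x.
Proof.
split=> [[c ->]|[c c_ge0 ->]]; first by exists (fun i => (c i)%:Z).
by exists (fun i => `|c i|%N); apply: eq_bigr => i _; rewrite gez0_abs.
Qed.

Lemma nonneg_alpha k : nonneg (alpha k).
Proof. by exists (kdelta k); [move=> i; rewrite ler0n | rewrite comb_kdelta]. Qed.

Lemma nonnegD x y : nonneg x -> nonneg y -> nonneg (x + y).
Proof.
move=> [c c_ge0 ->] [d d_ge0 ->]; rewrite combD; eexists; last reflexivity.
by move=> i; apply: addr_ge0.
Qed.

Lemma nonnegZ a x : 0 <= a -> nonneg x -> nonneg (a *: x).
Proof.
move=> a_ge0 [c c_ge0 ->]; rewrite combZ; eexists; last reflexivity.
by move=> i; apply: mulr_ge0.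
Qed.

Lemma nonneg_nonpos x : nonneg x -> nonpos x -> x = 0.
Proof.
move=> [c c_ge0 xc] [d d_ge0 xd].
have cd0 : comb (fun i => c i + d i) = comb (fun _ => 0).
  by rewrite -combD -xc -xd subrr comb0.
have c0 i : c i = 0 by have := comb_inj cd0 i; have := c_ge0 i; have := d_ge0 i; lia.
by rewrite xc -comb0; apply: eq_bigr => i _; rewrite c0.
Qed.

Lemma comb_gt0_nonpos c l : 0 < c l -> ~ nonpos (comb c).
Proof.
move=> cl_gt0 [d d_ge0 /esym]; rewrite combN => /comb_inj/(_ l).
by have := d_ge0 l; lia.
Qed.

Lemma comb_lt0_nonneg c l : c l < 0 -> ~ nonneg (comb c).
Proof. by move=> cl_lt0 [d d_ge0 /comb_inj/(_ l)]; have := d_ge0 l; lia. Qed.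

Hypothesis cartan_le0 : forall s t, s != t -> pairing (alphav s) (alpha t) <= 0.
Hypothesis cartan_eq0 :
  forall s t, pairing (alphav s) (alpha t) = 0 -> pairing (alphav t) (alpha s) = 0.

Local Notation cartan s t := (pairing (alphav s) (alpha t)).

(** * Rank two *)

Lemma actX_alt_word s t k x P Q u v :
  u = pairing (alphav s) (x + P *: alpha s + Q *: alpha t) ->
  v = pairing (alphav t) (x + P *: alpha s + Q *: alpha t) ->
  actX (alt_word s t k) (x + P *: alpha s + Q *: alpha t) =
  x + (alt_coef (cartan s t) (cartan t s) k u v P Q).1 *: alpha s
    + (alt_coef (cartan s t) (cartan t s) k u v P Q).2 *: alpha t.
Proof.
elim: k s t x P Q u v => [//|k IH] s t x P Q u v u_eq v_eq.
have rX_t : rX t (x + P *: alpha s + Q *: alpha t) =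
            x + (Q - v) *: alpha t + P *: alpha s.
  by rewrite /Defs.rX -v_eq scalerBl -!addrA; congr (_ + _); rewrite addrC -!addrA.
rewrite /= actX_rcons rX_t (IH t s x (Q - v) P (- v) (u - cartan s t * v)).
  by rewrite addrAC.
  by rewrite -rX_t /Defs.rX pairingBr pairingZr pairing_simple -v_eq; lia.
by rewrite -rX_t /Defs.rX pairingBr pairingZr -u_eq -v_eq mulrC.
Qed.

Lemma actX_alt_word_id s t m :
  (forall u v, alt_coef (cartan s t) (cartan t s) (2 * m) u v 0 0 = (0, 0)) ->
  actX (alt_word s t (2 * m)) =1 id.
Proof.
move=> period x; have := @actX_alt_word s t (2 * m) x 0 0 _ _ erefl erefl.
by rewrite period /= !scale0r !addr0.
Qed.

Lemma actX_rev_id u : actX u =1 id -> actX (rev u) =1 id.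
Proof. by move=> u_id x; rewrite -{1}(u_id x) actX_revK. Qed.

Lemma alt_word_reduced s t w : st_word s t w ->
  (forall u, st_word s t u -> actX u =1 actX w -> (size w <= size u)%N) ->
  (forall u, st_word s t u -> actX u =1 actX (rcons w s) -> (size w <= size u)%N) ->
  w = alt_word s t (size w).
Proof.
elim/last_ind: w s t => [//|w z IH] s t.
rewrite st_word_rcons => /andP[stw z_st] w_red ws_red.
have z_t : z = t.
  move: z_st; rewrite !inE => /orP[/eqP z_s|/eqP //]; subst z.
  suff : (size (rcons w s) <= size w)%N by rewrite size_rcons ltnn.
  by apply: ws_red => // u; rewrite !actX_rcons rXK.
subst z; rewrite size_rcons /=; congr rcons; apply: IH => [|u stu uw|u stu uw].
- by rewrite st_wordC.
- rewrite -ltnS -(size_rcons u t) -(size_rcons w t) w_red //.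
    by rewrite st_word_rcons st_wordC stu !inE eqxx orbT.
  by move=> v; rewrite !actX_rcons uw.
- by apply: ltnW; rewrite -(size_rcons w t) w_red // st_wordC.
Qed.

Lemma alt_word_reflect s t m :
  actX (alt_word s t (2 * m)) =1 id -> actX (alt_word t s (2 * m)) =1 id ->
  forall j, (j <= 2 * m)%N ->
  actX (alt_word t s j) =1 actX (alt_word s t (2 * m - j)) /\
  actX (alt_word s t j) =1 actX (alt_word t s (2 * m - j)).
Proof.
move=> st_id ts_id; elim=> [|j IH] j_le.
  by rewrite subn0; split=> y /=; rewrite ?st_id ?ts_id.
have [IH1 IH2] := IH (ltnW j_le).
have e : (2 * m - j = (2 * m - j.+1).+1)%N by rewrite subnSK.
by split=> y /=; rewrite actX_rcons ?IH1 ?IH2 e /= actX_rcons rXK.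
Qed.

Lemma reduced_alt_word_lt s t m k :
  (0 < m)%N -> actX (alt_word s t (2 * m)) =1 id ->
  (forall u, st_word s t u -> actX u =1 actX (alt_word s t k) -> (k <= size u)%N) ->
  (forall u, st_word s t u ->
     actX u =1 actX (rcons (alt_word s t k) s) -> (k <= size u)%N) ->
  (k < m)%N.
Proof.
move=> m_gt0 st_id red red_s; rewrite ltnNge; apply/negP => m_le_k.
have ts_id : actX (alt_word t s (2 * m)) =1 id.
  by rewrite -rev_alt_word_even; apply: actX_rev_id.
have [k_lt|k_ge] := ltnP k (2 * m).
- have [refl _] := alt_word_reflect st_id ts_id k_lt.
  have := red_s _ (st_word_alt_word _ _ (2 * m - k.+1)).
  by rewrite size_alt_word; move/(_ (fun u => esym (refl u))); lia.
- have k_split : alt_word s t k = alt_word s t (k - 2 * m) ++ alt_word s t (2 * m).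
    by rewrite -alt_wordD_even subnK.
  have : actX (alt_word s t (k - 2 * m)) =1 actX (alt_word s t k).
    by move=> x; rewrite k_split actX_cat st_id.
  by move/(red _ (st_word_alt_word _ _ _)); rewrite size_alt_word; lia.
Qed.

Lemma dihedral_nonneg s t w : s != t -> st_word s t w ->
  (forall u, st_word s t u -> actX u =1 actX w -> (size w <= size u)%N) ->
  (forall u, st_word s t u -> actX u =1 actX (rcons w s) -> (size w <= size u)%N) ->
  exists p q, [/\ 0 <= p, 0 <= q & actX w (alpha s) = p *: alpha s + q *: alpha t].
Proof.
move=> st stw w_red ws_red.
have w_alt := alt_word_reduced stw w_red ws_red.
move: w_red ws_red; rewrite w_alt size_alt_word; set k := size w => w_red ws_red.
have alpha_st : alpha s = 0 + 1 *: alpha s + 0 *: alpha t.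
  by rewrite add0r scale1r scale0r addr0.
rewrite alpha_st (@actX_alt_word _ _ _ _ _ _ 2 (cartan t s)) -?alpha_st
  ?pairing_simple //.
set c := alt_coef _ _ _ _ _ _ _.
suff [c1_ge0 c2_ge0] : 0 <= c.1 /\ 0 <= c.2 by exists c.1, c.2; rewrite add0r.
have a_le0 := cartan_le0 st.
have b_le0 : cartan t s <= 0 by apply: cartan_le0; rewrite eq_sym.
have [ab_ge4|ab_lt4] := lerP 4 (cartan s t * cartan t s).
  by apply: alt_coef_ge0 => //; lia.
have ab0 : cartan s t = 0 <-> cartan t s = 0 by split; apply: cartan_eq0.
have [m [m_gt0 period c_ge0]] := finite_dihedral a_le0 b_le0 ab0 ab_lt4.
apply: c_ge0; apply: reduced_alt_word_lt m_gt0 _ w_red ws_red.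
exact: actX_alt_word_id.
Qed.

(** * Length and positivity *)

Lemma len_exists w : exists m, `[< exists2 v, size v = m & actX v =1 actX w >].
Proof. by exists (size w); apply/asboolP; exists w. Qed.

Definition len w := ex_minn (len_exists w).

Lemma len_word w : exists2 v, size v = len w & actX v =1 actX w.
Proof. by rewrite /len; case: ex_minnP => m /asboolP. Qed.

Lemma len_min w v : actX v =1 actX w -> (len w <= size v)%N.
Proof.
by move=> vw; rewrite /len; case: ex_minnP => m _; apply; apply/asboolP; exists v.
Qed.

Lemma eq_len w w' : actX w =1 actX w' -> len w = len w'.
Proof.
move=> ww'; have [v sv vw] := len_word w; have [v' sv' v'w'] := len_word w'.
apply/eqP; rewrite eqn_leq -{1}sv' -{2}sv !len_min // => x.
all: by rewrite ?vw ?v'w' ww'.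
Qed.

Lemma len_eq0 w : len w = 0%N -> actX w =1 id.
Proof.
by move=> len0; have [v] := len_word w; rewrite len0 => /size0nil -> vw x; rewrite -vw.
Qed.

Lemma exists_descent w : (0 < len w)%N -> exists t, (len (rcons w t) < len w)%N.
Proof.
have [v] := len_word w; case/lastP: v => [<- //|v t]; rewrite size_rcons => <- vw _.
by exists t; rewrite ltnS len_min // => x; rewrite actX_rcons -vw actX_rcons rXK.
Qed.

(* Humphreys, Reflection groups and Coxeter groups, 5.4: factor w = v u with u in
   the subgroup generated by r_s, r_t, lengths adding up and v as short as possible. *)
Definition st_factor w s t v u :=
  [/\ st_word s t u, actX (v ++ u) =1 actX w & (size v + size u)%N = len w].

Lemma st_factorW w s t v u : st_word s t u -> actX (v ++ u) =1 actX w ->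
  (size v + size u <= len w)%N -> st_factor w s t v u.
Proof.
move=> stu vuw size_le; split=> //; apply/eqP; rewrite eqn_leq size_le -size_cat.
exact: len_min.
Qed.

Lemma min_st_factor w s t : exists v u, st_factor w s t v u /\
  forall v' u', st_factor w s t v' u' -> (size v <= size v')%N.
Proof.
have ex : exists m, `[< exists v u, st_factor w s t v u /\ size v = m >].
  have [v sv vw] := len_word w; exists (len w); apply/asboolP; exists v, [::].
  by rewrite -sv; split=> //; split=> //; [move=> x; rewrite cats0 | rewrite addn0].
case: (ex_minnP ex) => m /asboolP[v [u [fac <-]]] min_m.
by exists v, u; split=> // v' u' fac'; apply: min_m; apply/asboolP; exists v', u'.
Qed.

Section MinimalFactor.
Variables (w v u : seq I) (s t : I).
Hypothesis fac : st_factor w s t v u.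
Hypothesis v_min : forall v' u', st_factor w s t v' u' -> (size v <= size v')%N.

Lemma min_st_factor_size : (len (rcons w t) < len w)%N -> (size v < len w)%N.
Proof.
move=> desc; have [v' sv' v'w] := len_word (rcons w t).
apply: leq_ltn_trans (@v_min v' [:: t] _) _; last by rewrite sv'.
apply: st_factorW; first by rewrite /st_word /= !inE eqxx orbT.
  by move=> x; rewrite cats1 actX_rcons v'w actX_rcons rXK.
by rewrite addn1 sv'.
Qed.

Lemma min_st_factor_rcons z : z \in [:: s; t] -> (len v <= len (rcons v z))%N.
Proof.
move=> z_st; rewrite leqNgt; apply/negP => desc.
have [v' sv' v'vz] := len_word (rcons v z).
have [stu vuw size_vu] := fac.
have len_v := len_min (fun x => erefl (actX v x)).
have : (size v <= size v')%N.
  apply: v_min; apply: (@st_factorW _ _ _ _ (z :: u)).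
  - by rewrite /st_word /= z_st.
  - by move=> x; rewrite actX_cat /= v'vz actX_rcons rXK -actX_cat vuw.
  - by rewrite /= addnS -size_vu -addSn leq_add2r sv'; apply: leq_trans desc len_v.
by rewrite sv'; lia.
Qed.

Lemma min_st_factor_reduced u' :
  st_word s t u' -> actX u' =1 actX u -> (size u <= size u')%N.
Proof.
move=> _ u'u; have [_ vuw size_vu] := fac.
rewrite -(leq_add2l (size v)) size_vu -size_cat; apply: len_min => x.
by rewrite actX_cat u'u -actX_cat vuw.
Qed.

Lemma min_st_factor_reduced_rcons : (len w <= len (rcons w s))%N ->
  forall u', st_word s t u' -> actX u' =1 actX (rcons u s) -> (size u <= size u')%N.
Proof.
move=> asc u' _ u'us; have [_ vuw size_vu] := fac.
rewrite -(leq_add2l (size v)) size_vu -size_cat; apply: leq_trans asc (len_min _) => x.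
by rewrite actX_cat u'us actX_rcons -actX_cat vuw actX_rcons.
Qed.

End MinimalFactor.

Theorem nonneg_actX_alpha w s :
  (len w <= len (rcons w s))%N -> nonneg (actX w (alpha s)).
Proof.
move: {2}(len w) (erefl (len w)) => N; elim/ltn_ind: N w s => N IH w s lenw asc.
have [len0|len_gt0] := posnP (len w); first by rewrite len_eq0 //; apply: nonneg_alpha.
have [t desc] := exists_descent len_gt0.
have st : s != t by apply: contraTneq asc => ->; rewrite -ltnNge.
have [v [u [fac v_min]]] := min_st_factor w s t.
have lenv : (len v < N)%N.
  rewrite -lenw; apply: leq_ltn_trans (min_st_factor_size v_min desc).
  exact: len_min (fun x => erefl _).
have [stu vuw _] := fac.
have [p [q [p_ge0 q_ge0 u_alpha]]] := dihedral_nonneg st stu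
  (min_st_factor_reduced fac) (min_st_factor_reduced_rcons fac asc).
rewrite -vuw actX_cat u_alpha actXD !actXZ.
by apply: nonnegD; apply: nonnegZ => //; apply: IH lenv _ _ erefl _;
  apply: (min_st_factor_rcons fac v_min); rewrite !inE eqxx ?orbT.
Qed.

Lemma nonpos_actX_alpha w s :
  (len (rcons w s) < len w)%N -> nonpos (actX w (alpha s)).
Proof.
move=> desc; rewrite /nonpos -actXN -rX_alpha -actX_rcons.
apply: nonneg_actX_alpha; rewrite (@eq_len (rcons (rcons w s) s) w); first exact: ltnW.
by move=> x; rewrite !actX_rcons rXK.
Qed.

Lemma actX_alpha_sign w s : nonneg (actX w (alpha s)) \/ nonpos (actX w (alpha s)).
Proof.
have [/nonneg_actX_alpha|/nonpos_actX_alpha] := leqP (len w) (len (rcons w s)).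
  by left.
by right.
Qed.

Lemma actX_alpha_neq0 w k : actX w (alpha k) != 0.
Proof.
apply/eqP => wk0; move: (alpha_neq0 k).
by rewrite -(actX_revK w (alpha k)) wk0 actX0 eqxx.
Qed.

Lemma actX_id_of_nonneg w : (forall k, nonneg (actX w (alpha k))) -> actX w =1 id.
Proof.
move=> w_ge0; have [|/exists_descent[t desc]] := posnP (len w); first exact: len_eq0.
have := nonneg_nonpos (w_ge0 t) (nonpos_actX_alpha desc).
by move/eqP; rewrite (negbTE (actX_alpha_neq0 w t)).
Qed.

Lemma scale_alpha_eq0 a k : a *: alpha k = 0 -> a = 0.
Proof.
rewrite scale_alpha_comb -comb0 => /comb_inj/(_ k).
by rewrite /kdelta eqxx mulr1.
Qed.

Lemma actY_alphav w i j : actX w (alpha i) = alpha j -> actY w (alphav i) = alphav j.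
Proof.
move=> wij; set h := actY w (alphav i) - alphav j.
(* r_j w r_i w^-1 is x |-> x + <h, x> alpha_j; it maps every simple root into the
   positive cone, hence is the identity, so h = 0. *)
have refl_h x : actX (j :: w ++ i :: rev w) x = x + pairing h x *: alpha j.
  rewrite /= actX_cat /= /Defs.rX actXB actXZ actX_Krev wij -pairing_actY.
  rewrite /h pairingBl -addrA -scaleNr -scalerBl; congr (_ + _ *: _).
  by rewrite pairingDr pairingZr pairing_simple; ring.
have h_j : pairing h (alpha j) = 0.
  rewrite /h pairingBl pairing_simple pairing_actY -wij actX_revK.
  by rewrite pairing_simple subrr.
have refl_ge0 k : nonneg (actX (j :: w ++ i :: rev w) (alpha k)).
  have [->|kj] := eqVneq k j.
    by rewrite refl_h h_j scale0r addr0; apply: nonneg_alpha.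
  have [//|] := actX_alpha_sign (j :: w ++ i :: rev w) k.
  rewrite refl_h -comb_kdelta scale_alpha_comb combD => refl_le0; exfalso.
  apply: (comb_gt0_nonpos (l := k) _ refl_le0).
  by rewrite /kdelta eqxx (negbTE kj) mulr0 addr0.
have h0 : h = 0.
  apply: pairing_eq0 => x; apply: (@scale_alpha_eq0 _ j); apply: (@addrI _ x).
  by rewrite -refl_h addr0 actX_id_of_nonneg.
by apply/eqP; rewrite -subr_eq0 -/h h0.
Qed.

(** * Roots and coroots *)

Local Notation is_root := (is_root alpha alphav).
Local Notation pos_root := (pos_root alpha alphav).
Local Notation neg_root := (neg_root alpha alphav).
Local Notation coroot := (coroot alpha alphav).
Local Notation refl_word := (refl_word alpha alphav).
Local Notation Inv := (Inv alpha alphav).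
Local Notation quantum := (quantum alpha alphav).

Lemma pos_rootE x : pos_root x <-> is_root x /\ nonneg x.
Proof. by rewrite /Defs.pos_root nonneg_cone. Qed.

Lemma neg_rootE x : neg_root x <-> is_root x /\ nonpos x.
Proof. by rewrite /Defs.neg_root nonneg_cone. Qed.

Lemma root_alpha i : is_root (alpha i).
Proof. by exists [::], i. Qed.

Lemma root_actX w x : is_root x -> is_root (actX w x).
Proof. by move=> [v [i <-]]; exists (w ++ v), i; rewrite actX_cat. Qed.

Lemma root_opp x : is_root x -> is_root (- x).
Proof. by move=> [w [i <-]]; exists (rcons w i), i; rewrite actX_rcons rX_alpha actXN. Qed.

Lemma root_sign x : is_root x -> nonneg x \/ nonpos x.
Proof. by move=> [w [i <-]]; apply: actX_alpha_sign. Qed.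

Lemma root_nonneg_nonpos x : is_root x -> nonneg x -> nonpos x -> False.
Proof.
move=> [w [i <-]] x_ge0 x_le0.
by move/eqP: (nonneg_nonpos x_ge0 x_le0); rewrite (negbTE (actX_alpha_neq0 w i)).
Qed.

Lemma presentationP x : is_root x ->
  exists2 p, presentation alpha alphav x = Some p & actX p.1 (alpha p.2) = x.
Proof.
move=> x_root; rewrite /presentation; case: excluded_middle_informative => [h|[]].
  by eexists; [reflexivity | exact: proj2_sig (constructive_indefinite_description _ h)].
by case: x_root => w [i wi]; exists (w, i).
Qed.

Lemma coroot_actX_alpha w i : coroot (actX w (alpha i)) = actY w (alphav i).
Proof.
have [[w' i'] pres /= w'i'] := presentationP (root_actX w (root_alpha i)).
rewrite /Defs.coroot pres /=.
have : actX (rev w ++ w') (alpha i') = alpha i by rewrite actX_cat w'i' actX_revK.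
by move/actY_alphav; rewrite actY_cat => <-; rewrite actY_Krev.
Qed.

Lemma coroot_actX w x : is_root x -> coroot (actX w x) = actY w (coroot x).
Proof. by move=> [v [i <-]]; rewrite -actX_cat !coroot_actX_alpha actY_cat. Qed.

Lemma pairing_coroot x : is_root x -> pairing (coroot x) x = 2.
Proof.
by move=> [w [i <-]]; rewrite coroot_actX_alpha pairing_actY actX_revK pairing_simple.
Qed.

Lemma actX_refl_word x y : is_root x ->
  actX (refl_word x) y = y - pairing (coroot x) y *: x.
Proof.
move=> x_root; have [[w i] pres /= wi] := presentationP x_root.
rewrite /Defs.refl_word /Defs.coroot pres /= actX_cat /= /Defs.rX.
by rewrite actXB actX_Krev actXZ wi pairing_actY.
Qed.

Lemma actX_refl_word_rX x i y : is_root x ->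
  actX (refl_word (rX i x)) y = rX i (actX (refl_word x) (rX i y)).
Proof.
move=> x_root; have rx_root : is_root (rX i x) by apply: (root_actX [:: i]).
rewrite !actX_refl_word // (coroot_actX [:: i] x_root) /= pairing_rY.
by rewrite rXD rXN rXZ rXK.
Qed.

Lemma root_comb x : is_root x -> exists c, x = comb c.
Proof.
move=> /root_sign[[c _ ->]|[c _ xc]]; first by exists c.
by exists (fun l => - c l); rewrite -combN -xc opprK.
Qed.

Lemma root_scale_alpha x c i : is_root x -> x = c *: alpha i -> c = 1 \/ c = -1.
Proof.
move=> [w [k wk]] xc.
have [f f_eq] := root_comb (root_actX (rev w) (root_alpha i)).
have : comb (kdelta k) = comb (fun l => c * f l).
  by rewrite comb_kdelta -combZ -f_eq -actXZ -xc -wk actX_revK.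
move/comb_inj/(_ k); rewrite /kdelta eqxx mulrC => /esym/intUnitRing.unitzPl.
by case/orP=> /eqP; [left | right].
Qed.

Lemma nonneg_root_coord x i : is_root x -> nonneg x -> x <> alpha i ->
  exists c l, [/\ x = comb c, l != i & 0 < c l].
Proof.
move=> x_root [c c_ge0 xc] xi.
have [/existsP[l /andP[li cl]]|] := boolP [exists l, (l != i) && (c l != 0)].
  by exists c, l; split=> //; rewrite lt_def cl c_ge0.
rewrite negb_exists => /forallP c0.
have c_supp l : l != i -> c l = 0.
  by move=> li; apply/eqP; move: (c0 l); rewrite li negbK.
have := root_scale_alpha x_root (etrans xc (comb_supp1 c_supp)).
case=> ci; first by case: xi; rewrite xc (comb_supp1 c_supp) ci scale1r.
by have := c_ge0 i; rewrite ci.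
Qed.

Lemma nonneg_rX x i : is_root x -> nonneg x -> x <> alpha i -> nonneg (rX i x).
Proof.
move=> x_root x_ge0 xi; have [c [l [xc li cl]]] := nonneg_root_coord x_root x_ge0 xi.
have [//|] := root_sign (root_actX [:: i] x_root).
rewrite /= /Defs.rX {1}xc scale_alpha_comb combB => rx_le0; exfalso.
apply: (comb_gt0_nonpos (l := l) _ rx_le0).
by rewrite /kdelta (negbTE li) mulr0 subr0.
Qed.

(** * Quantum roots *)

Lemma quantum_pairing_simple e i : quantum e -> e <> alpha i ->
  0 < pairing (coroot e) (alpha i) -> pairing (coroot e) (alpha i) = 1.
Proof.
move=> [/pos_rootE[e_root e_ge0] qe] ei p_gt0; apply: qe => [|ie]; last exact: ei.
split; first exact/pos_rootE/(conj (root_alpha i) (nonneg_alpha i)).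
apply/neg_rootE; split; first exact: root_actX (root_alpha i).
have [c [l [ec li cl]]] := nonneg_root_coord e_root e_ge0 ei.
have [se_ge0|//] := root_sign (root_actX (refl_word e) (root_alpha i)); exfalso.
move: se_ge0; rewrite actX_refl_word //; set p := pairing _ _ in p_gt0 *.
rewrite ec -comb_kdelta combZ combB => se_ge0.
apply: (comb_lt0_nonneg (l := l) _ se_ge0).
by rewrite /kdelta (negbTE li) sub0r oppr_lt0 mulr_gt0.
Qed.

Lemma Inv_refl_word_rX g i h : is_root g -> Inv (refl_word (rX i g)) h ->
  h <> alpha i -> actX (refl_word (rX i g)) h <> - alpha i ->
  Inv (refl_word g) (rX i h).
Proof.
move=> g_root [/pos_rootE[h_root h_ge0] /neg_rootE[sh_root sh_le0]] hi shi.
split; first by apply/pos_rootE; split; [apply: (root_actX [:: i]) | apply: nonneg_rX].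
have -> : actX (refl_word g) (rX i h) = rX i (actX (refl_word (rX i g)) h).
  by rewrite actX_refl_word_rX // rXK.
apply/neg_rootE; split; first exact: (root_actX [:: i]).
rewrite /nonpos -rXN; apply: nonneg_rX => //; first exact: root_opp.
by move=> shi'; apply: shi; rewrite -shi' opprK.
Qed.

Lemma quantum_rX g i : quantum g -> g <> alpha i ->
  (pairing (coroot g) (alpha i) < 0 -> pairing (coroot g) (alpha i) = -1) ->
  quantum (rX i g).
Proof.
move=> [/pos_rootE[g_root g_ge0] qg] gi c_neg.
set c := pairing (coroot g) (alpha i) in c_neg.
have d_root : is_root (rX i g) by apply: (root_actX [:: i]).
have d_ge0 := nonneg_rX g_root g_ge0 gi.
have cd : coroot (rX i g) = rY i (coroot g) by apply: (coroot_actX [:: i]).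
have d_i : pairing (coroot (rX i g)) (alpha i) = - c.
  by rewrite cd pairing_rY rX_alpha pairingNr.
split; first exact/pos_rootE.
move=> h h_inv hd; have [/pos_rootE[h_root h_ge0] /neg_rootE[sh_root sh_le0]] := h_inv.
have [hi|hi] := eqVneq h (alpha i).
  move: sh_root sh_le0; rewrite hi d_i actX_refl_word // d_i scaleNr opprK.
  move=> sh_root sh_le0.
  have [c_lt0|c_ge0] := ltrP c 0; first by rewrite c_neg // opprK.
  case: (root_nonneg_nonpos sh_root _ sh_le0).
  exact: nonnegD (nonneg_alpha i) (nonnegZ c_ge0 d_ge0).
have [shi|shi] := eqVneq (actX (refl_word (rX i g)) h) (- alpha i); last first.
  rewrite cd pairing_rY; apply: qg; first by apply: Inv_refl_word_rX => //; apply/eqP.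
  by move=> hg; apply: hd; rewrite -hg rXK.
move: shi; rewrite actX_refl_word //; set q := pairing _ h => /eqP.
rewrite subr_eq => /eqP h_eq.
have q_eq : q = - c.
  have : q = c + q * 2.
    by rewrite {1}/q {1}h_eq pairingDr pairingNr d_i opprK pairingZr pairing_coroot.
  lia.
have [c_lt0|c_ge0] := ltrP c 0; first by rewrite q_eq c_neg // opprK.
case: (root_nonneg_nonpos h_root h_ge0).
rewrite /nonpos h_eq q_eq opprD opprK scaleNr opprK.
exact: nonnegD (nonneg_alpha i) (nonnegZ c_ge0 d_ge0).
Qed.

Lemma quantum_rX_actX beta i w : pos_root beta -> actX (rev w) (alpha i) = alpha i ->
  quantum (rX i beta) -> quantum (actX w beta) -> quantum (actX (i :: w) beta).
Proof.
move=> /pos_rootE[b_root b_ge0] w_fix q_rb q_wb.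
have c_eq : pairing (coroot (actX w beta)) (alpha i) =
            - pairing (coroot (rX i beta)) (alpha i).
  rewrite (coroot_actX w b_root) (coroot_actX [:: i] b_root) /=.
  by rewrite pairing_actY w_fix pairing_rY rX_alpha pairingNr opprK.
have wb_i : actX w beta <> alpha i.
  move=> wb_i; have [/pos_rootE[_ rb_ge0] _] := q_rb.
  move: rb_ge0; rewrite -(actX_revK w beta) wb_i w_fix rX_alpha.
  exact: root_nonneg_nonpos (root_alpha i) (nonneg_alpha i).
have rb_i : rX i beta <> alpha i.
  move=> rb_i; apply: root_nonneg_nonpos b_root b_ge0 _.
  by rewrite /nonpos -[beta](rXK i) rb_i rX_alpha opprK; apply: nonneg_alpha.
apply: quantum_rX q_wb wb_i _; rewrite c_eq => c_lt0.
by rewrite (quantum_pairing_simple q_rb rb_i) //; lia.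
Qed.

End RootDatum.

Theorem lemma2p28 (n : nat) (I : finType) (A : I -> I -> int)
    (alpha alphav : I -> 'rV[int]_n)
    (hKM : KM_root_datum A alpha alphav)
    (beta : 'rV[int]_n) (i : I) (w : seq I) :
  pos_root alpha alphav beta ->
  actX alpha alphav (rev w) (alpha i) = alpha i ->
  quantum alpha alphav beta ->
  quantum alpha alphav (rX alpha alphav i beta) ->
  quantum alpha alphav (actX alpha alphav w beta) ->
  quantum alpha alphav (actX alpha alphav (i :: w) beta) /\
  actY alpha alphav (i :: w) (coroot alpha alphav beta) =
    actY alpha alphav w (coroot alpha alphav beta)
    + rY alpha alphav i (coroot alpha alphav beta) - coroot alpha alphav beta.
Proof.
move=> beta_pos w_fix _ q_rbeta q_wbeta.
have [[cartan_ii cartan_le0 cartan_eq0] cartanE alpha_free _] := hKM.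
split; last exact: actY_cons_fixed.
apply: (quantum_rX_actX _ alpha_free _ _ beta_pos w_fix q_rbeta q_wbeta).
- by move=> j; rewrite cartanE.
- by move=> s t; rewrite !cartanE; apply: cartan_le0.
- by move=> s t; rewrite !cartanE => /cartan_eq0.
Qed.
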